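(* If $A\subseteq\mathbb{R}$ is homogeneous, then $A$ is not order-isomorphic to its complement $\mathbb{R}\setminus A$. Equivalently, if $A\subseteq \mathbb{R}$ is order-isomorphic to $\mathbb{R}\setminus A$, then there is an open interval $I$ such that $A\not\cong A\cap I$.
   Context: A suborder $A\subseteq\mathbb{R}$ is homogeneous if $A\cong A\cap I$ (order-isomorphism) for every open interval $I=(a,b)$ with $-\infty\le a<b\le\infty$. *)

From Stdlib Require Import Reals.
Open Scope R_scope.

(* A suborder of R is a predicate A : R -> Prop, ordered by the order of R. *)

(* A and B are order-isomorphic: there is a map f from A onto B which is
   strictly increasing (hence an order isomorphism: bijective, order
   preserving and reflecting). *)
Definition order_iso (A B : R -> Prop) : Prop :=
  exists f : R -> R,
    (forall x, A x -> B (f x)) /\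
    (forall x y, A x -> A y -> x < y -> f x < f y) /\
    (forall y, B y -> exists x, A x /\ f x = y).

(* Open interval (a,b) with -oo <= a < b <= +oo; None encodes -oo (for a)
   or +oo (for b). *)
Definition lower_ok (a : option R) (x : R) : Prop :=
  match a with None => True | Some a => a < x end.
Definition upper_ok (b : option R) (x : R) : Prop :=
  match b with None => True | Some b => x < b end.
Definition ends_lt (a b : option R) : Prop :=
  match a, b with Some a, Some b => a < b | _, _ => True end.
Definition open_interval (a b : option R) (x : R) : Prop :=
  lower_ok a x /\ upper_ok b x.

Definition homogeneous (A : R -> Prop) : Prop :=
  forall a b : option R, ends_lt a b ->
    order_iso A (fun x => A x /\ open_interval a b x).

Definition complement (A : R -> Prop) : R -> Prop := fun x => ~ A x.

From Pilot Require Import Defs.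
From Stdlib Require Import Reals Lra Classical ClassicalEpsilon.
Open Scope R_scope.

(* Suppose A is homogeneous and g : A -> R \ A is an order
   isomorphism.  Homogeneity makes A dense in R, and gives an order
   isomorphism f : A -> A ∩ (0,1).  A strictly increasing map h defined on a
   dense set D extends to a nondecreasing map on all of R by
   x |-> sup { h d | d ∈ D, d <= x }; at points outside D this extension
   avoids the image h(D).  Hence the extension K of g sends A into R \ A and
   R \ A into A, while the extension F of f sends A into A and R \ A into
   R \ A (and all of R into (0,1)).  The composite F ∘ K is a nondecreasing
   self-map of R with bounded range, so it has a fixed point c by the
   Knaster-Tarski argument (c = sup { x | x <= F (K x) }).  But F ∘ K swaps
   A and its complement, so c ∈ A iff c ∉ A: contradiction. *)

Definition dense (D : R -> Prop) : Prop :=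
  forall u v, u < v -> exists d, D d /\ u < d /\ d < v.

Definition sup_extension (D : R -> Prop) (h : R -> R) (x : R) : R :=
  epsilon (inhabits 0) (is_lub (fun y => exists d, D d /\ d <= x /\ y = h d)).

Section Extension.

Variable D : R -> Prop.
Variable h : R -> R.
Hypothesis D_dense : dense D.
Hypothesis h_incr : forall x y, D x -> D y -> x < y -> h x < h y.

Let H := sup_extension D h.

Lemma h_nondecr x y : D x -> D y -> x <= y -> h x <= h y.
Proof. intros Hx Hy [Hlt | ->]; [left; auto | lra]. Qed.

(* The supremum exists: the set is nonempty (density below x) and bounded
   by h d for any d ∈ D above x. *)
Lemma sup_extension_lub x :
  is_lub (fun y => exists d, D d /\ d <= x /\ y = h d) (H x).
Proof.
  unfold H, sup_extension. apply epsilon_spec.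
  destruct (completeness (fun y => exists d, D d /\ d <= x /\ y = h d))
    as [m Hm]; [| | exists m; exact Hm].
  - destruct (D_dense x (x + 1)) as [e [He [H1 H2]]]; [lra |].
    exists (h e). intros y [d [Hd [Hdx ->]]]. apply h_nondecr; auto; lra.
  - destruct (D_dense (x - 1) x) as [d [Hd [H1 H2]]]; [lra |].
    exists (h d), d. repeat split; auto; lra.
Qed.

Lemma sup_extension_ge x d : D d -> d <= x -> h d <= H x.
Proof. intros Hd Hdx. apply (proj1 (sup_extension_lub x)). exists d; auto. Qed.

Lemma sup_extension_le x e : D e -> x < e -> H x <= h e.
Proof.
  intros He Hxe. apply (proj2 (sup_extension_lub x)).
  intros y [d [Hd [Hdx ->]]]. apply h_nondecr; auto; lra.
Qed.

Lemma sup_extension_mono x y : x <= y -> H x <= H y.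
Proof.
  intros Hxy. apply (proj2 (sup_extension_lub x)).
  intros z [d [Hd [Hdx ->]]]. apply sup_extension_ge; auto; lra.
Qed.

Lemma sup_extension_agrees x : D x -> H x = h x.
Proof.
  intros Hx. apply Rle_antisym.
  - apply (proj2 (sup_extension_lub x)).
    intros z [d [Hd [Hdx ->]]]. apply h_nondecr; auto.
  - apply sup_extension_ge; auto; lra.
Qed.

(* Outside D, H misses the image h(D): a point of D between a and x (or
   between x and a) separates H x from h a strictly. *)
Lemma sup_extension_avoids_image x a : ~ D x -> D a -> H x <> h a.
Proof.
  intros Hx Ha E.
  destruct (Rtotal_order a x) as [Hax | [-> | Hxa]].
  - destruct (D_dense a x Hax) as [d [Hd [H1 H2]]].
    pose proof (sup_extension_ge x d Hd (Rlt_le _ _ H2)).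
    pose proof (h_incr a d Ha Hd H1). lra.
  - contradiction.
  - destruct (D_dense x a Hxa) as [d [Hd [H1 H2]]].
    pose proof (sup_extension_le x d Hd H1).
    pose proof (h_incr d a Hd Ha H2). lra.
Qed.

Lemma sup_extension_bounded lo hi :
  (forall d, D d -> lo < h d < hi) -> forall x, lo < H x < hi.
Proof.
  intros Hb x.
  destruct (D_dense (x - 1) x) as [d [Hd [_ Hdx]]]; [lra |].
  destruct (D_dense x (x + 1)) as [e [He [Hxe _]]]; [lra |].
  pose proof (sup_extension_ge x d Hd (Rlt_le _ _ Hdx)).
  pose proof (sup_extension_le x e He Hxe).
  pose proof (Hb d Hd). pose proof (Hb e He). lra.
Qed.

Lemma sup_extension_iso (B : R -> Prop) :
  (forall x, D x -> B (h x)) -> (forall y, B y -> exists x, D x /\ h x = y) ->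
  forall x, D x <-> B (H x).
Proof.
  intros hB hsurj x. split.
  - intros Hx. rewrite sup_extension_agrees; auto.
  - intros HB. apply NNPP. intros Hx.
    destruct (hsurj (H x) HB) as [a [Ha E]].
    exact (sup_extension_avoids_image x a Hx Ha (eq_sym E)).
Qed.

End Extension.

(* Knaster-Tarski on R: a nondecreasing map with bounded range has a fixed
   point, namely the supremum of { x | x <= phi x }. *)
Lemma monotone_fixpoint (phi : R -> R) (lo hi : R) :
  (forall x y, x <= y -> phi x <= phi y) -> (forall x, lo <= phi x <= hi) ->
  exists c, phi c = c.
Proof.
  intros mono bnd.
  destruct (completeness (fun x => x <= phi x)) as [c [Hub Hleast]].
  - exists hi. intros x Hx. pose proof (bnd x). lra.
  - exists lo. apply bnd.
  - assert (Hc : c <= phi c).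
    { apply Hleast. intros x Hx. pose proof (mono x c (Hub x Hx)). lra. }
    assert (phi c <= c) by (apply Hub, mono, Hc).
    exists c. lra.
Qed.

(* A suborder order-isomorphic to its complement is nonempty: otherwise
   the complement is all of R and nothing maps onto it. *)
Lemma iso_complement_inhabited (A : R -> Prop) :
  order_iso A (complement A) -> exists a, A a.
Proof.
  intros [g [_ [_ gsurj]]].
  destruct (classic (A 0)) as [H0 | H0]; [eauto |].
  destruct (gsurj 0 H0) as [a [Ha _]]. eauto.
Qed.

(* A nonempty homogeneous suborder is dense: its copy inside (u, v) is
   nonempty. *)
Lemma homogeneous_dense (A : R -> Prop) :
  homogeneous A -> (exists a, A a) -> dense A.
Proof.
  intros Hom [a Ha] u v Huv.
  destruct (Hom (Some u) (Some v) Huv) as [k [kmaps _]].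
  destruct (kmaps a Ha) as [Hk [Hu Hv]].
  exists (k a). simpl in *. auto.
Qed.

Theorem mainTheorem12 (A : R -> Prop) :
  homogeneous A -> ~ order_iso A (complement A).
Proof.
  intros Hom Hg.
  pose proof (homogeneous_dense A Hom (iso_complement_inhabited A Hg)) as Ad.
  destruct Hg as [g [gmaps [gincr gsurj]]].
  destruct (Hom (Some 0) (Some 1) ltac:(simpl; lra)) as [f [fmaps [fincr fsurj]]].
  set (K := sup_extension A g). set (F := sup_extension A f).
  pose proof (sup_extension_iso A g Ad gincr _ gmaps gsurj) as Kswap.
  pose proof (sup_extension_iso A f Ad fincr _ fmaps fsurj) as Fkeep.
  assert (Fbound : forall x, 0 < F x < 1).
  { apply sup_extension_bounded; auto.
    intros d Hd. destruct (fmaps d Hd) as [_ [H0 H1]]. simpl in *. lra. }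
  destruct (monotone_fixpoint (fun x => F (K x)) 0 1) as [c Hc].
  - intros x y Hxy. apply sup_extension_mono, sup_extension_mono; auto.
  - intros x. pose proof (Fbound (K x)). lra.
  - specialize (Kswap c). specialize (Fkeep (K c)). specialize (Fbound (K c)).
    fold K F in Kswap, Fkeep, Fbound. rewrite Hc in Fkeep, Fbound.
    (* F (K c) = c lies in (0,1), so F's membership test reduces to A. *)
    assert (Defs.open_interval (Some 0) (Some 1) c) by (split; simpl; lra).
    unfold complement in Kswap. destruct (classic (A c)); tauto.
Qed.
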